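(* For all $p\in(0,1)$ and $n\ge0$, $\mathbb P_p[o\rightsquigarrow\partial B_n]=\mathbb P'_p[o\leftrightsquigarrow\partial B_n]$.
   Context: $\mathbb P_p$ is directed Bernoulli bond percolation on $\mathbb Z^d$: each directed nearest-neighbor edge $(u,v)$ ($\|u-v\|_1=1$) is open independently with probability $p$; $\{o\rightsquigarrow\partial B_n\}$ is the event that there is a path of open directed edges from the origin $o$ to a vertex of $\partial B_n$. $\mathbb P'_p$ is ordinary (undirected) Bernoulli bond percolation on the nearest-neighbor edges of $\mathbb Z^d$ with parameter $p$, and $\{o\leftrightsquigarrow\partial B_n\}$ is the event that some vertex of $\partial B_n$ is joined to $o$ by a path of open edges. Here $B_n=\{x:\|x\|_1\le n\}$, $\partial B_n=B_{n+1}\setminus B_n$. *)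

From HB Require Import structures.
From mathcomp Require Import all_boot all_order all_algebra.
From mathcomp Require Import reals.
Set Implicit Arguments. Unset Strict Implicit. Unset Printing Implicit Defensive.
Import Order.TTheory GRing.Theory Num.Theory.

(* The vertices of the cube [-N,N]^d of Z^d are encoded as finite functions
   'I_d -> 'I_(2N+1) (= 'I_(2N).+1), coordinate k standing for the integer k - N. *)

Definition cube (d N : nat) := {ffun 'I_d -> 'I_(2 * N).+1}.

Definition coord d N (x : cube d N) (i : 'I_d) : int :=
  ((x i : nat)%:Z - N%:Z)%R.

Definition norm1 d N (x : cube d N) : nat := \sum_(i < d) absz (coord x i).

Definition dist1 d N (x y : cube d N) : nat :=
  \sum_(i < d) absz (coord x i - coord y i)%R.

Definition adj d N (x y : cube d N) : bool := dist1 x y == 1%N.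

Definition origin d N : cube d N := [ffun => inord N : 'I_(2 * N).+1].

(* x \in \partial B_n = B_{n+1} \ B_n, i.e. ||x||_1 = n+1 *)
Definition in_bdry d N (n : nat) (x : cube d N) : bool := norm1 x == n.+1.

Definition bern_weight (R : realType) (I : finType) (p : R) (om : {ffun I -> bool}) : R :=
  (\prod_(i : I) (if om i then p else 1 - p))%R.

Definition Prob (R : realType) (I : finType) (p : R) (E : pred {ffun I -> bool}) : R :=
  (\sum_(om | E om) bern_weight p om)%R.

(* Directed percolation: each ordered pair (u,v) carries an independent
   Bernoulli(p) variable; the directed edge (u,v) (u,v neighbours) is open iff
   om (u,v).  (Coordinates of non-adjacent pairs are irrelevant dummies.) *)
Definition dir_open d N (om : {ffun cube d N * cube d N -> bool}) : rel (cube d N) :=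
  fun u v => adj u v && om (u, v).

(* Undirected percolation: each unordered pair {u,v} (encoded as the set
   [set u; v]) carries an independent Bernoulli(p) variable. *)
Definition undir_open d N (om : {ffun {set cube d N} -> bool}) : rel (cube d N) :=
  fun u v => adj u v && om [set u; v].

Definition dir_reach d N (n : nat) (om : {ffun cube d N * cube d N -> bool}) : bool :=
  [exists w, in_bdry n w && connect (dir_open om) (origin d N) w].

Definition undir_reach d N (n : nat) (om : {ffun {set cube d N} -> bool}) : bool :=
  [exists w, in_bdry n w && connect (undir_open om) (origin d N) w].

From HB Require Import structures.
From mathcomp Require Import all_boot all_order all_algebra.
From mathcomp Require Import reals ring.
Set Implicit Arguments. Unset Strict Implicit. Unset Printing Implicit Defensive.
Import Order.TTheory GRing.Theory Num.Theory.
Local Open Scope ring_scope.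

(* Both events are found by the same exploration of the cluster of the origin:
   take a vertex k that is reached but not yet explored, reveal the states of
   the edges from k to the unexplored vertices, one at a time, and then delete
   k.  In both models each revealed variable is a fresh Bernoulli(p) variable:
   the label of an edge at k ((k, j) or {k, j}) is never the label of an edge
   between two other vertices, so after k is deleted none of them is looked at
   again.  Hence the exploration, and with it the probability of reaching the
   boundary, has the same law in both models; this holds in any finite graph,
   for every p. *)

Section BernoulliProduct.
Variables (R : realType) (p : R) (I : finType).
Implicit Types (om : {ffun I -> bool}) (E F : pred {ffun I -> bool}).

Definition ffun_upd om i b : {ffun I -> bool} :=
  [ffun x => if x == i then b else om x].

Lemma ffun_upd_same om i b : ffun_upd om i b i = b.
Proof. by rewrite ffunE eqxx. Qed.

Lemma ffun_upd_id om i : ffun_upd om i (om i) = om.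
Proof. by apply/ffunP => x; rewrite ffunE; case: eqP => // ->. Qed.

Lemma ffun_upd_upd om i b c : ffun_upd (ffun_upd om i b) i c = ffun_upd om i c.
Proof. by apply/ffunP => x; rewrite !ffunE; case: eqP. Qed.

Lemma ffun_upd_flip_inj i : injective (fun om => ffun_upd om i (~~ om i)).
Proof.
move=> om1 om2 /= eq_flip; apply/ffunP => x.
have := congr1 (fun om => om x) eq_flip.
by rewrite !ffunE; case: eqP => [-> /negb_inj|].
Qed.

Lemma sum_ffun_pair_flip i (F : {ffun I -> bool} -> R) :
  \sum_om F om = \sum_(om : {ffun I -> bool} | om i) (F om + F (ffun_upd om i false)).
Proof.
rewrite (bigID (fun om : {ffun I -> bool} => om i)) big_split /=; congr (_ + _).
rewrite (reindex_inj (@ffun_upd_flip_inj i)) /=.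
apply: eq_big => om; first by rewrite ffun_upd_same negbK.
by rewrite ffun_upd_same negbK => ->.
Qed.

Lemma bern_weight_upd om i b :
  bern_weight p (ffun_upd om i b)
  = (if b then p else 1 - p) * \prod_(x | x != i) (if om x then p else 1 - p).
Proof.
rewrite /bern_weight (bigD1 i) //= ffun_upd_same; congr (_ * _).
by apply: eq_bigr => x /negbTE neq_xi; rewrite ffunE neq_xi.
Qed.

Lemma sum_bern_weight_cond i (F : {ffun I -> bool} -> R) :
  \sum_om bern_weight p om * F om
  = p * \sum_om bern_weight p om * F (ffun_upd om i true)
    + (1 - p) * \sum_om bern_weight p om * F (ffun_upd om i false).
Proof.
rewrite !(sum_ffun_pair_flip i) !mulr_sumr -big_split /=.
apply: eq_bigr => om om_i; rewrite !ffun_upd_upd.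
have om_true : ffun_upd om i true = om by rewrite -om_i ffun_upd_id.
have w_om : bern_weight p om = p * \prod_(x | x != i) (if om x then p else 1 - p).
  by rewrite -[in LHS]om_true bern_weight_upd.
by rewrite om_true w_om bern_weight_upd; ring.
Qed.

Lemma Prob_sum E : Prob p E = \sum_om bern_weight p om * (E om)%:R.
Proof.
rewrite /Prob big_mkcond /=; apply: eq_bigr => om _.
by case: (E om); rewrite ?mulr1 ?mulr0.
Qed.

Lemma Prob_cond i E :
  Prob p E = p * Prob p (fun om => E (ffun_upd om i true))
             + (1 - p) * Prob p (fun om => E (ffun_upd om i false)).
Proof. by rewrite !Prob_sum (sum_bern_weight_cond i). Qed.

Lemma eq_Prob E F : E =1 F -> Prob p E = Prob p F.
Proof. exact: eq_bigl. Qed.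

Lemma Prob_pred0 E : E =1 xpred0 -> Prob p E = 0.
Proof. exact: big_pred0. Qed.

Lemma Prob_predT E : E =1 predT -> Prob p E = 1.
Proof.
move=> /eq_Prob ->; rewrite /Prob /bern_weight.
rewrite -(bigA_distr_bigA (fun (i : I) (b : bool) => if b then p else 1 - p)).
by rewrite big1 // => i _; rewrite big_bool /=; ring.
Qed.

End BernoulliProduct.

Section Reach.
Variables (V : finType) (T : pred V).
Implicit Types (W K : {set V}) (r : rel V).

Definition rel_in W r : rel V := fun u v => [&& u \in W, v \in W & r u v].

Definition reach W K r : bool :=
  [exists s, exists t, [&& s \in K, s \in W, T t & connect (rel_in W r) s t]].

Lemma eq_reach W K r r' : rel_in W r =2 rel_in W r' -> reach W K r = reach W K r'.
Proof.
by move=> eq_r; apply: eq_existsb => s; apply: eq_existsb => t; rewrite (eq_connect eq_r).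
Qed.

Lemma reach_setT1 s r : reach setT [set s] r = [exists t, T t && connect r s t].
Proof.
have rel_inT : rel_in setT r =2 r by move=> u v; rewrite /rel_in !inE.
apply/existsP/existsP => [[s' /existsP [t]] | [t /andP [Tt conn_st]]].
  rewrite inE (eq_connect rel_inT) => /and4P [/eqP -> _ Tt conn].
  by exists t; rewrite Tt.
by exists s; apply/existsP; exists t; rewrite !inE eqxx Tt (eq_connect rel_inT).
Qed.

Lemma reach_set0 W K r : K :&: W = set0 -> reach W K r = false.
Proof.
move=> KW0; apply/negbTE/existsP => -[s /existsP [t /and4P [sK sW _ _]]].
have : s \in K :&: W by rewrite inE sK sW.
by rewrite KW0 inE.
Qed.

Lemma reach_mem W K r k : k \in K -> k \in W -> T k -> reach W K r.
Proof.
by move=> kK kW Tk; apply/existsP; exists k; apply/existsP; exists k; rewrite kK kW Tk connect0.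
Qed.

Lemma path_last_visit W r k x q : ~~ T k -> x \in W ->
  path (rel_in W r) x q -> T (last x q) ->
  (x != k /\ connect (rel_in (W :\ k) r) x (last x q)) \/
  (exists2 j, j \in W :\ k & r k j /\ connect (rel_in (W :\ k) r) j (last x q)).
Proof.
move=> nTk; elim: q x => [|y q IHq] x xW /=.
  by move=> _ Tx; left; split; [apply: contraNneq nTk => <- | exact: connect0].
case/andP=> /and3P [_ yW rxy] path_yq Tlast.
have [[neq_yk conn_y]|] := IHq y yW path_yq Tlast; last by right.
have [eq_xk|neq_xk] := eqVneq x k.
  by rewrite eq_xk in rxy; right; exists y; rewrite ?inE ?neq_yk.
left; split => //; apply: connect_trans conn_y; apply: connect1.
by rewrite /rel_in !inE neq_xk neq_yk xW yW.
Qed.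

Lemma reach_explore W K r k : k \in K -> k \in W -> ~~ T k ->
  reach W K r = reach (W :\ k) ((K :\ k) :|: [set j in W | r k j]) r.
Proof.
move=> kK kW nTk; apply/idP/idP.
  case/existsP=> s /existsP [t /and4P [sK sW Tt /connectP [q path_q t_last]]]; subst t.
  have [[neq_sk conn]|[j]] := path_last_visit nTk sW path_q Tt.
    apply/existsP; exists s; apply/existsP; exists (last s q).
    by rewrite !inE neq_sk sK sW Tt conn.
  rewrite !inE => /andP [neq_jk jW] [rkj conn].
  apply/existsP; exists j; apply/existsP; exists (last s q).
  by rewrite !inE neq_jk jW rkj Tt conn orbT.
have sub_k : subrel (rel_in (W :\ k) r) (connect (rel_in W r)).
  move=> u v /and3P []; rewrite !inE => /andP [_ uW] /andP [_ vW] ruv.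
  by apply: connect1; rewrite /rel_in uW vW.
case/existsP=> s /existsP [t /and4P []].
rewrite !inE => sK /andP [_ sW] Tt /(connect_sub sub_k) conn.
apply/existsP; case/orP: sK => [/andP [_ sK] | /andP [_ rks]].
  by exists s; apply/existsP; exists t; rewrite sK sW Tt conn.
exists k; apply/existsP; exists t; rewrite kK kW Tt /=; apply: connect_trans conn.
by apply: connect1; rewrite /rel_in kW sW rks.
Qed.

End Reach.

Section Exploration.
Variables (R : realType) (p : R) (V : finType) (a : rel V) (T : pred V).
Variables (I : finType) (e : V -> V -> I).
Hypothesis e_inj : forall k, injective (e k).
Hypothesis e_sep : forall k u v j, u != k -> v != k -> e u v != e k j.
Implicit Types (om : {ffun I -> bool}) (W K D X : {set V}).

Definition open_rel om : rel V := fun u v => a u v && om (e u v).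

Definition open_nbrs D k om : {set V} := [set j in D | open_rel om k j].

Definition open_reach W K : pred {ffun I -> bool} := fun om => reach T W K (open_rel om).

Lemma open_nbrs0 k om : open_nbrs set0 k om = set0.
Proof. by apply/setP => j; rewrite !inE. Qed.

Lemma open_rel_upd_off W k j om b :
  rel_in (W :\ k) (open_rel (ffun_upd om (e k j) b)) =2 rel_in (W :\ k) (open_rel om).
Proof.
move=> u v; rewrite /rel_in /open_rel !inE ffunE.
have [//|neq_uk] := eqVneq u k; have [//|neq_vk] := eqVneq v k.
by rewrite (negbTE (e_sep j neq_uk neq_vk)).
Qed.

Lemma open_nbrs_upd D k j om b : j \in D ->
  open_nbrs D k (ffun_upd om (e k j) b)
  = (if a k j && b then [set j] else set0) :|: open_nbrs (D :\ j) k om.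
Proof.
move=> jD; apply/setP => i; rewrite !inE /open_rel ffunE (inj_eq (@e_inj k)).
have [->|neq_ij] := eqVneq i j; case: (a k j) b => -[];
  by rewrite ?jD ?inE ?eqxx ?orbF /= ?(negbTE neq_ij).
Qed.

Definition reach_via_nbrs W k D X : pred {ffun I -> bool} :=
  fun om => reach T (W :\ k) (X :|: open_nbrs D k om) (open_rel om).

Lemma open_reach_explore W K k : k \in K -> k \in W -> ~~ T k ->
  open_reach W K =1 reach_via_nbrs W k W (K :\ k).
Proof. by move=> kK kW nTk om; apply: reach_explore. Qed.

Lemma reach_via_nbrs0 W k X : reach_via_nbrs W k set0 X =1 open_reach (W :\ k) X.
Proof. by move=> om; rewrite /reach_via_nbrs open_nbrs0 setU0. Qed.

Lemma Prob_reach_via_nbrs_upd W k D X j b : j \in D ->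
  Prob p (fun om => reach_via_nbrs W k D X (ffun_upd om (e k j) b))
  = Prob p (reach_via_nbrs W k (D :\ j) (X :|: if a k j && b then [set j] else set0)).
Proof.
move=> jD; apply: eq_Prob => om.
by rewrite /reach_via_nbrs open_nbrs_upd // setUA; apply: eq_reach; apply: open_rel_upd_off.
Qed.

End Exploration.

Section Comparison.
Variables (R : realType) (p : R) (V : finType) (a : rel V) (T : pred V).
Variables (I1 I2 : finType) (e1 : V -> V -> I1) (e2 : V -> V -> I2).
Hypothesis e1_inj : forall k, injective (e1 k).
Hypothesis e2_inj : forall k, injective (e2 k).
Hypothesis e1_sep : forall k u v j, u != k -> v != k -> e1 u v != e1 k j.
Hypothesis e2_sep : forall k u v j, u != k -> v != k -> e2 u v != e2 k j.

Lemma Prob_reach_via_nbrs_relabel W k :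
  (forall K, Prob p (open_reach a T e1 (W :\ k) K) = Prob p (open_reach a T e2 (W :\ k) K)) ->
  forall D X, Prob p (reach_via_nbrs a T e1 W k D X) = Prob p (reach_via_nbrs a T e2 W k D X).
Proof.
move=> IHW D; have [n ltD] := ubnP #|D|; elim: n D ltD => // n IHn D ltD X.
have [->|[j jD]] := set_0Vmem D.
  by rewrite !(eq_Prob _ (reach_via_nbrs0 _ _ _ _ _ _)).
have ltDj : (#|D :\ j| < n)%N by move: ltD; rewrite (cardsD1 j D) jD.
rewrite (Prob_cond _ (e1 k j)) (Prob_cond _ (e2 k j)); congr (_ * _ + _ * _).
  all: rewrite [LHS](Prob_reach_via_nbrs_upd _ _ _ e1_inj e1_sep _ _ _ _ jD).
  all: rewrite [RHS](Prob_reach_via_nbrs_upd _ _ _ e2_inj e2_sep _ _ _ _ jD).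
  all: exact: IHn.
Qed.

Lemma Prob_open_reach_relabel W K :
  Prob p (open_reach a T e1 W K) = Prob p (open_reach a T e2 W K).
Proof.
have [n ltW] := ubnP #|W|; elim: n W ltW K => // n IHn W ltW K.
have [KW0|[k]] := set_0Vmem (K :&: W).
  by rewrite !Prob_pred0 // => om; apply: reach_set0.
rewrite inE => /andP [kK kW]; have [Tk|nTk] := boolP (T k).
  by rewrite !Prob_predT // => om; apply: reach_mem Tk.
rewrite !(eq_Prob _ (open_reach_explore _ _ kK kW nTk)).
apply: Prob_reach_via_nbrs_relabel => K'; apply: IHn.
by move: ltW; rewrite (cardsD1 k W) kW.
Qed.

End Comparison.

Lemma pair_label_sep (V : eqType) (k u v j : V) : u != k -> (u, v) != (k, j).
Proof. by move=> neq_uk; rewrite xpair_eqE (negbTE neq_uk). Qed.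

Lemma set2_inj (V : finType) (k : V) : injective (fun v => [set k; v]).
Proof.
move=> x y eq_kxy.
have /set2P [eq_xk|//] : x \in [set k; y] by rewrite -eq_kxy set22.
have /set2P [eq_yk|->//] : y \in [set k; x] by rewrite eq_kxy set22.
by rewrite eq_xk eq_yk.
Qed.

Lemma set2_label_sep (V : finType) (k u v j : V) :
  u != k -> v != k -> [set u; v] != [set k; j].
Proof.
move=> neq_uk neq_vk; apply: contraTneq (set21 k j) => <-.
by rewrite !inE negb_or eq_sym neq_uk eq_sym neq_vk.
Qed.

Theorem lemma3p4 (R : realType) (d n N : nat) (p : R) :
  (0 < p < 1)%R -> (n < N)%N ->
  Prob p (dir_reach (d:=d) (N:=N) n) = Prob p (undir_reach (d:=d) (N:=N) n).
Proof.
move=> _ _.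
pose o := origin d N; pose T := in_bdry (d:=d) (N:=N) n.
have -> : Prob p (dir_reach (d:=d) (N:=N) n)
          = Prob p (open_reach (@adj d N) T pair setT [set o]).
  by apply: eq_Prob => om; rewrite /open_reach reach_setT1.
have -> : Prob p (undir_reach (d:=d) (N:=N) n)
          = Prob p (open_reach (@adj d N) T (fun u v : cube d N => [set u; v]) setT [set o]).
  by apply: eq_Prob => om; rewrite /open_reach reach_setT1.
apply: Prob_open_reach_relabel; last exact: set2_label_sep.
- by move=> k x y [].
- exact: set2_inj.
- by move=> k u v j neq_uk _; apply: pair_label_sep.
Qed.
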